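(* In the setting below, let $g,\tilde g\in G$, $y=\varphi_{g^{-1}}(y_0)$, $\tilde y=\varphi_{\tilde g^{-1}}(y_0)$ and $e_g=\Phi_g(\tilde g^{-1})$. Then $V^y(y,\tilde y)=V^e(e_g)$, and the element $\zeta_e\in\mathfrak g$ defined by $\langle\langle\zeta_e,\xi\rangle\rangle=d_{e_g}V^e\big(T_I\Phi_{e_g}\xi\big)$ for all $\xi\in\mathfrak g$ satisfies, for all $\xi\in\mathfrak g$, $$\langle\langle\zeta_e,\xi\rangle\rangle=\frac{d}{ds}\Big|_{s=0}V^y\big(\varphi_{\tilde g^{-1}\exp(s\xi)}(y_0),\,y\big)\quad\text{(left observed system)},$$ $$\langle\langle\zeta_e,\xi\rangle\rangle=\frac{d}{ds}\Big|_{s=0}V^y\big(\varphi_{\exp(s\xi)\tilde g^{-1}}(y_0),\,y\big)\quad\text{(right observed system)}.$$ In particular $\zeta_e$ depends only on $\tilde g$ and the measurement $y$ (and not otherwise on $g$).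
   Context: $G$ is a Lie group with identity $I$, Lie algebra $\mathfrak g$, exponential map $\exp$, and $\langle\langle\cdot,\cdot\rangle\rangle$ is an inner product on $\mathfrak g$. $\mathcal Y$ is a smooth manifold, $y_0\in\mathcal Y$ fixed. Two cases: a left observed system, where $\Phi_g(h)=gh$ and $\varphi:G\times\mathcal Y\to\mathcal Y$ is a smooth left action ($\varphi_a\circ\varphi_b=\varphi_{ab}$); and a right observed system, where $\Phi_g(h)=hg$ and $\varphi$ is a smooth right action ($\varphi_a\circ\varphi_b=\varphi_{ba}$). The system is $\dot g=T_I\Phi_g\cdot\zeta(t)$, $y=\varphi_{g^{-1}}(y_0)$, with $\zeta(t)\in\mathfrak g$ known. $V^y:\mathcal Y\times\mathcal Y\to\mathbb R$ is smooth, symmetric and $\varphi$-invariant: $V^y(\varphi_h(a),\varphi_h(b))=V^y(a,b)$ for all $h\in G$, $a,b\in\mathcal Y$. Define $V^e:G\to\mathbb R$ by $V^e(e)=V^y(\varphi_e(y_0),y_0)$. Thus $e_g=g\tilde g^{-1}$ in the left case and $e_g=\tilde g^{-1}g$ in the right case. *)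

From Stdlib Require Import Reals.
Open Scope R_scope.

Inductive side := LeftObs | RightObs.

Definition is_group {G : Type} (mul : G -> G -> G) (inv : G -> G) (I : G) : Prop :=
  (forall a b c, mul a (mul b c) = mul (mul a b) c) /\
  (forall a, mul I a = a) /\ (forall a, mul a I = a) /\
  (forall a, mul (inv a) a = I) /\ (forall a, mul a (inv a) = I).

Definition Phi {G : Type} (mul : G -> G -> G) (sd : side) (g h : G) : G :=
  match sd with LeftObs => mul g h | RightObs => mul h g end.

Definition is_action {G Y : Type} (mul : G -> G -> G) (I : G) (sd : side)
  (phi : G -> Y -> Y) : Prop :=
  (forall y, phi I y = y) /\
  (forall a b y, phi a (phi b y) =
     match sd with LeftObs => phi (mul a b) y | RightObs => phi (mul b a) y end).

Definition Ve {G Y : Type} (phi : G -> Y -> Y) (Vy : Y -> Y -> R) (y0 : Y) (e : G) : R :=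
  Vy (phi e y0) y0.

(* Invariance of V^y under the action lets one translate the measurement
   y = phi_{g^-1}(y0) back to y0 by applying phi_g to both arguments; this
   turns V^y(phi_a(y0), y) into V^e(Phi_g(a)).  Since Phi_g(Phi_{g~^-1}(x)) =
   Phi_{e_g}(x), the curve defining zeta_e is exactly the curve
   s |-> V^y(phi_{Phi_{g~^-1}(exp(s xi))}(y0), y), which only involves g~ and y. *)

From Stdlib Require Import Reals.
Open Scope R_scope.

Section ObservedSystem.

Context {G Y : Type} {mul : G -> G -> G} {inv : G -> G} {I : G}.
Hypothesis Ggrp : is_group mul inv I.

Lemma Phi_comp (sd : side) (g h x : G) :
  Phi mul sd g (Phi mul sd h x) = Phi mul sd (Phi mul sd g h) x.
Proof.
  destruct Ggrp as [Hassoc _].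
  destruct sd; simpl; rewrite Hassoc; reflexivity.
Qed.

Context {sd : side} {phi : G -> Y -> Y}.
Hypothesis Hact : is_action mul I sd phi.

Lemma act_comp (a b : G) (y : Y) : phi a (phi b y) = phi (Phi mul sd a b) y.
Proof. destruct Hact as [_ Hcomp]; destruct sd; apply Hcomp. Qed.

Lemma act_inv_cancel (g : G) (y : Y) : phi g (phi (inv g) y) = y.
Proof.
  destruct Ggrp as [_ [_ [_ [Hinvl Hinvr]]]]; destruct Hact as [Hid _].
  rewrite act_comp; destruct sd; simpl; rewrite ?Hinvl, ?Hinvr; apply Hid.
Qed.

Context {Vy : Y -> Y -> R} {y0 : Y}.
Hypothesis Vinv : forall h a b, Vy (phi h a) (phi h b) = Vy a b.

Lemma Vy_measurement_Ve (g a : G) :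
  Vy (phi a y0) (phi (inv g) y0) = Ve phi Vy y0 (Phi mul sd g a).
Proof.
  unfold Ve; rewrite <- (Vinv g), act_inv_cancel, act_comp; reflexivity.
Qed.

End ObservedSystem.

Theorem mainTheorem6
  (G Y L : Type) (mul : G -> G -> G) (inv : G -> G) (I : G)
  (Ggrp : is_group mul inv I)
  (scal : R -> L -> L) (expG : L -> G) (ip : L -> L -> R)
  (sd : side) (phi : G -> Y -> Y) (Hact : is_action mul I sd phi)
  (Vy : Y -> Y -> R)
  (Vsym : forall a b, Vy a b = Vy b a)
  (Vinv : forall h a b, Vy (phi h a) (phi h b) = Vy a b)
  (y0 : Y) (g gt : G) :
  let y := phi (inv g) y0 in
  let yt := phi (inv gt) y0 in
  let eg := Phi mul sd g (inv gt) in
  Vy y yt = Ve phi Vy y0 eg /\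
  forall zeta_e : L,
    (forall xi : L,
       derivable_pt_lim (fun s => Ve phi Vy y0 (Phi mul sd eg (expG (scal s xi)))) 0
         (ip zeta_e xi)) ->
    forall xi : L,
      derivable_pt_lim
        (fun s => match sd with
                  | LeftObs => Vy (phi (mul (inv gt) (expG (scal s xi))) y0) y
                  | RightObs => Vy (phi (mul (expG (scal s xi)) (inv gt)) y0) y
                  end) 0 (ip zeta_e xi).
Proof.
  intros y yt eg; split.
  - rewrite Vsym; apply (Vy_measurement_Ve Ggrp Hact Vinv).
  - intros zeta_e Hzeta xi.
    apply derivable_pt_lim_ext with (2 := Hzeta xi); intro s.
    transitivity (Vy (phi (Phi mul sd (inv gt) (expG (scal s xi))) y0) y);
      [| now destruct sd].
    unfold y, eg; rewrite (Vy_measurement_Ve Ggrp Hact Vinv), (Phi_comp Ggrp).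
    reflexivity.
Qed.
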